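(* Consider a network with a source node $SN$, a destination node $DN$ and a finite set of relay nodes (RNs). Let $S$ be the set of legitimate routes, where a legitimate route is a sequence of nodes starting at $SN$, ending at $DN$, and containing each RN at most once. Let $K\ge 1$ and suppose each route (and each sub-route, i.e. any sequence of consecutive links starting at $SN$) $y$ is assigned a utility vector $\mathbf{f}(y)=[f_1(y),\dots,f_K(y)]$ such that, for every $k\in\{1,\dots,K\}$, $$f_k(y)=\sum_{i=1}^{|y|-1} f_k(y_{i,i+1}),$$ where $|y|$ is the number of nodes of $y$, $y_{i,i+1}$ is the link between its $i$-th and $(i+1)$-st nodes, and every link value is positive: $f_k(y_{i,i+1})>0$ for all $k$, $i$ and all routes $y$. Let $x=\{SN\rightarrow \bar{R}_i\rightarrow DN\}\in S$, where $\bar{R}_i$ denotes the (ordered) sequence of RNs of $x$, and let $x'=\{SN\rightarrow\bar{R}_i\}$ be its sub-route (all links of $x$ except the last hop). Suppose there exists a route $x_d=\{SN\rightarrow\bar{R}_j\rightarrow DN\}\in S$ with $\bar{R}_j\neq\bar{R}_i$ that weakly dominates $x'$, i.e. $\mathbf{f}(x_d)\succeq\mathbf{f}(x')$. Then $x$ cannot generate any Pareto-optimal route: every legitimate route $x_g^{(j)}=\{SN\rightarrow\bar{R}_i\rightarrow R_j\rightarrow DN\}$ obtained from $x$ by inserting a single RN $R_j$ between the last RN of $x$ and $DN$ is not Pareto-optimal.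
   Context: Dominance (all objectives are to be minimized): for utility vectors $\mathbf{f}(a)=[f_1(a),\dots,f_K(a)]$ and $\mathbf{f}(b)$, $a$ strongly dominates $b$, written $\mathbf{f}(a)\succ\mathbf{f}(b)$, iff $f_k(a)<f_k(b)$ for all $k\in\{1,\dots,K\}$; $a$ weakly dominates $b$, written $\mathbf{f}(a)\succeq\mathbf{f}(b)$, iff $f_k(a)\le f_k(b)$ for all $k$ and $f_{k'}(a)<f_{k'}(b)$ for some $k'$. A route $x\in S$ is Pareto-optimal iff there is no route $y\in S$ with $\mathbf{f}(y)\succ\mathbf{f}(x)$. Route generation: a route $x=\{SN\rightarrow\bar{R}_i\rightarrow DN\}$ generates the route $x_g^{(j)}=\{SN\rightarrow\bar{R}_i\rightarrow R_j\rightarrow DN\}$ by inserting a single relay node $R_j$ between the last RN of $x$ and $DN$. *)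

From Stdlib Require List.
From mathcomp Require Import all_boot all_order all_algebra.
Set Implicit Arguments. Unset Strict Implicit. Unset Printing Implicit Defensive.
Import Order.TTheory GRing.Theory Num.Theory.
Local Open Scope ring_scope.

Inductive node (T : Type) := SN | RN of T | DN.
Arguments SN {T}. Arguments DN {T}.

Section Routes.
Variables (T : finType) (R : realFieldType) (K : nat).
(* link utilities: w a b k = f_k of the link a -> b *)
Variable w : node T -> node T -> 'I_K -> R.

Fixpoint util (p : seq (node T)) (k : 'I_K) : R :=
  match p with
  | a :: ((b :: _) as t) => w a b k + util t k
  | _ => 0
  end.

Definition route (rs : seq T) : seq (node T) := SN :: rcons (map (@RN T) rs) DN.
Definition subroute (rs : seq T) : seq (node T) := SN :: map (@RN T) rs.

Definition legit (rs : seq T) : Prop := uniq rs.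

Fixpoint links (p : seq (node T)) : seq (node T * node T) :=
  match p with
  | a :: ((b :: _) as t) => (a, b) :: links t
  | _ => [::]
  end.

Definition positive_links : Prop :=
  forall rs, legit rs -> forall a b, List.In (a, b) (links (route rs)) ->
    forall k, 0 < w a b k.

Definition strongly_dominates (p q : seq (node T)) : Prop :=
  forall k, util p k < util q k.
Definition weakly_dominates (p q : seq (node T)) : Prop :=
  (forall k, util p k <= util q k) /\ (exists k, util p k < util q k).

Definition pareto_optimal (rs : seq T) : Prop :=
  legit rs /\ ~ (exists ys, legit ys /\ strongly_dominates (route ys) (route rs)).
End Routes.

From mathcomp Require Import all_boot all_order all_algebra.
Set Implicit Arguments.
Unset Strict Implicit.
Unset Printing Implicit Defensive.

Import Order.TTheory GRing.Theory Num.Theory.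
Local Open Scope ring_scope.

(* Appending the hop [R_i] -> [R_j] -> [DN] to the sub-route [x'] adds the values
   of two links of the legitimate route [x_g], which are positive; hence
   [f(x_g) > f(x')] componentwise.  Since [f(x_d) <= f(x')] componentwise, [x_d]
   strongly dominates [x_g]. *)

Section ExtendedRoute.
Variables (T : finType) (R : realFieldType) (K : nat).
Variable w : node T -> node T -> 'I_K -> R.

Lemma util_rcons a s b k :
  util w (rcons (a :: s) b) k = util w (a :: s) k + w (last a s) b k.
Proof.
elim: s a => [|c s IHs] a /=; first by rewrite addr0 add0r.
by move: (IHs c) => /= ->; rewrite addrA.
Qed.

Lemma links_rcons_last a (s : seq (node T)) b :
  List.In (last a s, b) (links (rcons (a :: s) b)).
Proof. by elim: s a => [|c s IHs] a /=; [left | right; apply: IHs]. Qed.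

Lemma links_rcons_sub l (p : seq (node T)) c :
  List.In l (links p) -> List.In l (links (rcons p c)).
Proof.
elim: p => [|a [|b p] IHp] //= [-> | l_in]; first by left.
by right; apply: IHp.
Qed.

Lemma route_rcons (rs : seq T) (r : T) :
  route (rcons rs r) = rcons (rcons (subroute rs) (RN r)) DN.
Proof. by rewrite /route map_rcons. Qed.

Lemma util_subroute_lt_route_rcons (rs : seq T) (r : T) k :
  positive_links w -> legit (rcons rs r) ->
  util w (subroute rs) k < util w (route (rcons rs r)) k.
Proof.
move=> hpos hleg; set last_rn := last SN (map (@RN T) rs).
have link_pos a b : List.In (a, b) (links (route (rcons rs r))) -> 0 < w a b k.
  by move=> ab_in; apply: (hpos _ hleg).
have pos_last : 0 < w (RN r) DN k.
  apply: link_pos; rewrite route_rcons.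
  by have := links_rcons_last SN (rcons (map (@RN T) rs) (RN r)) DN; rewrite last_rcons.
have pos_before_last : 0 < w last_rn (RN r) k.
  apply: link_pos; rewrite route_rcons; apply: links_rcons_sub.
  exact: links_rcons_last.
rewrite route_rcons util_rcons last_rcons -[SN :: _]/(rcons (subroute rs) (RN r)).
rewrite util_rcons -/last_rn -addrA ltrDl.
exact: addr_gt0.
Qed.

End ExtendedRoute.

Theorem proposition1 (T : finType) (R : realFieldType) (K : nat)
    (w : node T -> node T -> 'I_K -> R)
    (hK : (1 <= K)%N) (hpos : positive_links w)
    (ri : seq T) (hx : legit ri)
    (rj : seq T) (hxd : legit rj) (hne : rj <> ri)
    (hdom : weakly_dominates w (route rj) (subroute ri)) :
  forall r : T, legit (rcons ri r) -> ~ pareto_optimal w (rcons ri r).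
Proof.
move=> r hleg [_ []]; exists rj; split=> // k.
exact: le_lt_trans (hdom.1 k) (util_subroute_lt_route_rcons k hpos hleg).
Qed.
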